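(* Let $G=(V,E)$ be a finite undirected graph with $V \subset \mathbb{N}$, and let $\mathbf{p}=(p_e)_{e\in E}$ be any collection of probabilities $p_e \in [0,1]$. Let $\vec G(\mathbf{p})$ be the random orientation of $G$ in which each edge $e=\{x,y\}\in E$ with $x<y$ is oriented from $x$ to $y$ with probability $p_e$ and from $y$ to $x$ otherwise, independently over edges, and let $\mathbb{P}_{G,\mathbf{p}}$ denote the corresponding probability measure. For vertices $x,y$, write $x\rightarrow y$ for the event that $\vec G(\mathbf{p})$ contains a directed path from $x$ to $y$. Then for any three vertices $s,a,b\in V$, \[\mathbb{P}_{G,\mathbf{p}}(s\rightarrow a \cap s\rightarrow b) \ge \mathbb{P}_{G,\mathbf{p}}(s\rightarrow a)\, \mathbb{P}_{G,\mathbf{p}}(s\rightarrow b).\]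
   Context: A directed path from $x$ to $x$ is taken to exist trivially (the path of length zero), so $x\rightarrow x$ always holds. *)

From HB Require Import structures.
From mathcomp Require Import all_boot all_order all_algebra.
From mathcomp Require Import finmap.
Set Implicit Arguments. Unset Strict Implicit. Unset Printing Implicit Defensive.
Import Order.TTheory GRing.Theory Num.Theory.
Local Open Scope fset_scope.
Local Open Scope ring_scope.

(* A finite undirected graph G = (V,E) with V ⊂ ℕ: V is a finite set of
   naturals; each edge {x,y} with x<y is stored as the ordered pair (x,y). *)
Definition is_graph (V : {fset nat}) (E : {fset nat * nat}) : Prop :=
  forall e, e \in E -> [/\ (e.1 < e.2)%N, e.1 \in V & e.2 \in V].

(* An orientation: omega e = true means e = (x,y) (x<y) is oriented x -> y. *)
Definition orientation (E : {fset nat * nat}) := {ffun E -> bool}.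

Definition darc (V : {fset nat}) (E : {fset nat * nat}) (omega : orientation E)
  : rel V := fun x y =>
  [exists e : E, ((val e == (val x, val y)) && omega e)
              || ((val e == (val y, val x)) && ~~ omega e)].

Definition reach (V : {fset nat}) (E : {fset nat * nat}) (omega : orientation E)
  (x y : V) : bool := connect (darc omega) x y.

Definition weight (R : nzRingType) (E : {fset nat * nat}) (p : E -> R)
  (omega : orientation E) : R :=
  \prod_(e : E) (if omega e then p e else 1 - p e).

Definition Prob (R : nzRingType) (E : {fset nat * nat}) (p : E -> R)
  (A : pred (orientation E)) : R :=
  \sum_(omega : orientation E | A omega) weight p omega.

From HB Require Import structures.
From mathcomp Require Import all_boot all_order all_algebra.
From mathcomp Require Import finmap.
From mathcomp Require Import ring.
Import Order.TTheory GRing.Theory Num.Theory.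
Local Open Scope fset_scope.
Local Open Scope ring_scope.

Set Implicit Arguments. Unset Strict Implicit. Unset Printing Implicit Defensive.

(* Induction on the number of edges whose orientation is genuinely random.
   The edges with p_e in {0, 1} are forced, and the vertices forcedly reachable
   from s are reached almost surely.  If no random edge touches this set,
   reachability from s is deterministic and the inequality is trivial.
   Otherwise pick a random edge e at such a vertex u and condition on its
   orientation: orienting e away from u can only help s -> v, for every v, so
   the events s -> a and s -> b move in the same direction, and the law of
   total covariance reduces the claim to the two conditioned measures, each
   having one random edge less. *)

Lemma connect_forward_closed (T : finType) (r : rel T) (C : pred T) x y :
  (forall u v, C u -> r u v -> C v) -> C x -> connect r x y -> C y.
Proof.
move=> closedC + /connectP[q]; elim: q x => [|z q IHq] x Cx /=; first by move=> _ ->.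
by case/andP=> /(closedC _ _ Cx) Cz; apply: IHq.
Qed.

(* The law of total covariance for a two-point mixture. *)
Lemma mixture_prod_le (R : numDomainType) (t x0 x1 y0 y1 z0 z1 : R) :
  0 <= t <= 1 -> x0 * y0 <= z0 -> x1 * y1 <= z1 -> 0 <= (x1 - x0) * (y1 - y0) ->
  (t * x1 + (1 - t) * x0) * (t * y1 + (1 - t) * y0) <= t * z1 + (1 - t) * z0.
Proof.
case/andP=> t_ge0 t_le1 le_xy0 le_xy1 cov_ge0; rewrite -subr_ge0.
have -> : t * z1 + (1 - t) * z0 - (t * x1 + (1 - t) * x0) * (t * y1 + (1 - t) * y0)
    = t * (z1 - x1 * y1) + (1 - t) * (z0 - x0 * y0)
      + t * (1 - t) * ((x1 - x0) * (y1 - y0)) by ring.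
rewrite -subr_ge0 in t_le1; rewrite -subr_ge0 in le_xy0; rewrite -subr_ge0 in le_xy1.
apply: addr_ge0; first by apply: addr_ge0; apply: mulr_ge0.
by rewrite mulr_ge0 // mulr_ge0.
Qed.

Section RandomOrientation.
Variables (R : numDomainType) (V : {fset nat}) (E : {fset nat * nat}).
Implicit Types (p : E -> R) (w : orientation E) (e : E) (c : bool).

Definition respects p w := forall e, (p e = 1 -> w e) /\ (p e = 0 -> ~~ w e).

Definition random_edges p : {set E} := [set e | (p e != 0) && (p e != 1)].

Definition forced_arc p : rel V := fun x y =>
  [exists e : E, (val e == (val x, val y)) && (p e == 1)
              || (val e == (val y, val x)) && (p e == 0)].

Definition incident e (x : V) := (val x == (val e).1) || (val x == (val e).2).

Definition tail w e : nat := if w e then (val e).1 else (val e).2.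

Definition flip e w : orientation E := [ffun e' => (e' == e) (+) w e'].

(* Conditioning on the orientation c of e, as a new edge-probability vector. *)
Definition pin p e c : E -> R := fun e' => if e' == e then c%:R else p e'.

Lemma flipK e : involutive (flip e).
Proof. by move=> w; apply/ffunP => e'; rewrite !ffunE addbA addbb. Qed.

Lemma weight_ge0 p w : (forall e, 0 <= p e <= 1) -> 0 <= weight p w.
Proof.
move=> hp; apply: prodr_ge0 => e _; case/andP: (hp e) => pe_ge0 pe_le1.
by case: ifP; rewrite ?subr_ge0.
Qed.

Lemma sum_weight p : \sum_w weight p w = 1.
Proof.
rewrite /weight -(bigA_distr_bigA (fun e (b : bool) => if b then p e else 1 - p e)).
by rewrite big1 // => e _; rewrite big_bool /= addrC subrK.
Qed.

Lemma ProbE p A : Prob p A = \sum_w (A w)%:R * weight p w.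
Proof.
by rewrite /Prob big_mkcond; apply: eq_bigr => w _; case: (A w); rewrite ?mul1r ?mul0r.
Qed.

Lemma Prob_const p A c : (forall w, weight p w != 0 -> A w = c) -> Prob p A = c%:R.
Proof.
move=> Ac; rewrite ProbE (eq_bigr (fun w => c%:R * weight p w)).
  by rewrite -mulr_sumr sum_weight mulr1.
by move=> w _; case: (eqVneq (weight p w) 0) => [->|/Ac ->]; rewrite ?mulr0.
Qed.

Lemma weight_neq0_respects p w : weight p w != 0 -> respects p w.
Proof.
move=> /prodf_neq0 nz e.
by split=> pe; have := nz e isT; rewrite pe; case: (w e); rewrite ?subrr ?eqxx.
Qed.

Lemma forced_arc_darc p w : respects p w -> subrel (forced_arc p) (darc w).
Proof.
move=> hw x y /existsP[e arc_e]; apply/existsP; exists e; have [pe1 pe0] := hw e.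
by case/orP: arc_e => /andP[-> /eqP pe]; [rewrite (pe1 pe) | rewrite (pe0 pe) orbT].
Qed.

Lemma reach_forced p w (s v : V) :
  respects p w -> connect (forced_arc p) s v -> reach w s v.
Proof.
by move=> hw; apply: connect_sub => x y /(forced_arc_darc hw) arc_xy; apply: connect1.
Qed.

Lemma darc_respects p w (x y : V) : respects p w -> darc w x y ->
  forced_arc p x y || [exists e in random_edges p, incident e x].
Proof.
move=> hw /existsP[e arc_e]; case: (boolP (e \in random_edges p)) => [re | ].
  apply/orP; right; apply/existsP; exists e; rewrite re /incident.
  by case/orP: arc_e => /andP[/eqP-> _]; rewrite eqxx ?orbT.
rewrite inE negb_and !negbK => det_e; apply/orP; left; apply/existsP; exists e.
have [pe1 pe0] := hw e.
case/orP: det_e => /eqP pe; rewrite pe eqxx;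
  [move: (pe0 pe) | move: (pe1 pe)]; case: (w e) arc_e => //= arc_e _;
  by rewrite ?andbT ?andbF ?orbF /= in arc_e *; rewrite arc_e ?orbT.
Qed.

Lemma reach_forcedE p w (s : V) : respects p w ->
  (forall e u, e \in random_edges p -> connect (forced_arc p) s u -> ~~ incident e u) ->
  reach w s =1 connect (forced_arc p) s.
Proof.
move=> hw isolated v; apply/idP/idP; last exact: reach_forced.
apply: connect_forward_closed (connect0 _ _) => x y sx /(darc_respects hw).
case/orP=> [arc_xy | /existsP[e /andP[re inc_ex]]].
  exact: connect_trans sx (connect1 arc_xy).
by rewrite (negbTE (isolated e x re sx)) in inc_ex.
Qed.

Lemma darc_flip e w (x y : V) : darc (flip e w) x y -> darc w x y || (val y == tail w e).
Proof.
case/existsP=> e'; rewrite ffunE; case: (eqVneq e' e) => [-> | _] arc_e'.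
  by apply/orP; right; rewrite /tail; case/orP: arc_e' => /andP[/eqP-> ]; case: (w e).
by apply/orP; left; apply/existsP; exists e'.
Qed.

Lemma reach_flip e w (s u v : V) :
  reach w s u -> tail w e = val u -> reach (flip e w) s v -> reach w s v.
Proof.
move=> su tail_u; apply: connect_forward_closed (connect0 _ _) => x y sx /darc_flip.
case/orP=> [arc_xy | /eqP y_u]; first exact: connect_trans sx (connect1 arc_xy).
by rewrite (val_inj (etrans y_u tail_u)).
Qed.

Lemma pin_bounds p e c : (forall e, 0 <= p e <= 1) -> forall e', 0 <= pin p e c e' <= 1.
Proof. by move=> hp e'; rewrite /pin; case: eqP => // _; case: c; rewrite ?lexx ?ler01. Qed.

Lemma random_edges_pin p e c : random_edges (pin p e c) = random_edges p :\ e.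
Proof.
apply/setP => e'; rewrite !inE /pin; case: (eqVneq e' e) => //= _.
by case: c; rewrite eqxx ?andbF.
Qed.

Lemma respects_pin p e c w : e \in random_edges p ->
  respects (pin p e c) w -> respects p w /\ w e = c.
Proof.
rewrite inE => /andP[/negP pe_neq0 /negP pe_neq1] hw; split.
  move=> e'; have := hw e'; rewrite /pin; case: eqP => [-> _ | //].
  by split=> /eqP.
have [pe1 pe0] := hw e; rewrite /pin eqxx in pe1 pe0.
case: c {hw} pe1 pe0 => [pe1 _ | _ pe0]; first exact: pe1.
by apply/negbTE/pe0.
Qed.

Lemma weight_pin_split p e w :
  weight p w = p e * weight (pin p e true) w + (1 - p e) * weight (pin p e false) w.
Proof.
have weightD1 (q : E -> R) : weight q w = (if w e then q e else 1 - q e) *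
    \prod_(e' | e' != e) (if w e' then q e' else 1 - q e').
  by rewrite /weight (bigD1 e).
have pin_off c : \prod_(e' | e' != e) (if w e' then pin p e c e' else 1 - pin p e c e')
    = \prod_(e' | e' != e) (if w e' then p e' else 1 - p e').
  by apply: eq_bigr => e' /negbTE e'_ne; rewrite /pin e'_ne.
by rewrite !weightD1 !pin_off /pin eqxx; case: (w e) => /=; ring.
Qed.

Lemma Prob_pin_split p e A :
  Prob p A = p e * Prob (pin p e true) A + (1 - p e) * Prob (pin p e false) A.
Proof.
by rewrite /Prob !mulr_sumr -big_split; apply: eq_bigr => w _; apply: weight_pin_split.
Qed.

Lemma weight_pin_flip p e c w : weight (pin p e (~~ c)) (flip e w) = weight (pin p e c) w.
Proof.
apply: eq_bigr => e' _; rewrite /pin ffunE; case: eqP => [-> | //].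
by case: c; case: (w e); rewrite /= ?subr0 ?subrr.
Qed.

Lemma Prob_pin_flip p e c A :
  Prob (pin p e (~~ c)) A = Prob (pin p e c) (fun w => A (flip e w)).
Proof.
rewrite /Prob (reindex_inj (inv_inj (flipK e))) /=.
by apply: eq_bigr => w _; apply: weight_pin_flip.
Qed.

Lemma Prob_reach_pin_le p e c (s u v : V) : (forall e, 0 <= p e <= 1) ->
  e \in random_edges p -> connect (forced_arc p) s u ->
  val u = (if c then (val e).1 else (val e).2) ->
  Prob (pin p e (~~ c)) (fun w => reach w s v) <= Prob (pin p e c) (fun w => reach w s v).
Proof.
move=> hp re su u_tail; rewrite Prob_pin_flip !ProbE; apply: ler_sum => w _.
have [-> | /weight_neq0_respects resp_pin] := eqVneq (weight (pin p e c) w) 0.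
  by rewrite !mulr0.
have [resp we] := respects_pin re resp_pin.
have flip_le : reach (flip e w) s v -> reach w s v.
  by apply: reach_flip (reach_forced resp su) _; rewrite /tail we.
apply: ler_wpM2r; first exact/weight_ge0/pin_bounds.
by rewrite ler_nat; case: (reach (flip e w) s v) flip_le => // ->.
Qed.

Section Correlation.
Variables s a b : V.

Definition reach_correlated p :=
  Prob p (fun w => reach w s a) * Prob p (fun w => reach w s b)
  <= Prob p (fun w => reach w s a && reach w s b).

Lemma reach_correlated_pivot p e (u : V) : (forall e, 0 <= p e <= 1) ->
  e \in random_edges p -> connect (forced_arc p) s u -> incident e u ->
  reach_correlated (pin p e true) -> reach_correlated (pin p e false) ->
  reach_correlated p.
Proof.
move=> hp re su inc_eu corr1 corr0.
pose c := val u == (val e).1.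
have u_tail : val u = (if c then (val e).1 else (val e).2).
  by move: inc_eu; rewrite /incident /c; case: eqP => [-> | _ /eqP].
have leX := Prob_reach_pin_le a hp re su u_tail.
have leY := Prob_reach_pin_le b hp re su u_tail.
rewrite /reach_correlated !(Prob_pin_split p e); apply: mixture_prod_le => //.
by case: c {u_tail} leX leY => /= leX leY;
  [apply: mulr_ge0 | apply: mulr_le0]; rewrite subr_cp0.
Qed.

Lemma reach_correlated_isolated p :
  (forall e u, e \in random_edges p -> connect (forced_arc p) s u -> ~~ incident e u) ->
  reach_correlated p.
Proof.
move=> isolated; have reachE w : weight p w != 0 -> reach w s =1 connect (forced_arc p) s.
  by move=> /weight_neq0_respects hw; apply: reach_forcedE.
have Prob_reach v : Prob p (fun w => reach w s v) = (connect (forced_arc p) s v)%:R.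
  by apply: Prob_const => w /reachE ->.
have Prob_reach2 : Prob p (fun w => reach w s a && reach w s b)
    = (connect (forced_arc p) s a && connect (forced_arc p) s b)%:R.
  by apply: Prob_const => w /reachE reach_w; rewrite !reach_w.
rewrite /reach_correlated Prob_reach2 !Prob_reach -natrM ler_nat.
by case: (connect _ s a); case: (connect _ s b).
Qed.

Lemma reach_correlatedP p : (forall e, 0 <= p e <= 1) -> reach_correlated p.
Proof.
have [n] := ubnP #|random_edges p|; elim: n p => // n IHn p lt_p hp.
have [/existsP[e /andP[re /existsP[u /andP[su inc_eu]]]] | isolated] :=
  boolP [exists e in random_edges p, exists u, connect (forced_arc p) s u && incident e u].
  have IHpin c : reach_correlated (pin p e c).
    apply: IHn (pin_bounds _ _ hp).
    by rewrite random_edges_pin; rewrite (cardsD1 e) re in lt_p.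
  exact: reach_correlated_pivot hp re su inc_eu (IHpin true) (IHpin false).
apply: reach_correlated_isolated => e u re su; apply: contraNN isolated => inc_eu.
by apply/existsP; exists e; rewrite re; apply/existsP; exists u; rewrite su.
Qed.
End Correlation.
End RandomOrientation.

Theorem theorem1 (R : realFieldType) (V : {fset nat}) (E : {fset nat * nat})
  (hG : is_graph V E) (p : E -> R) (hp : forall e, 0 <= p e <= 1)
  (s a b : V) :
  Prob p (fun omega => reach omega s a && reach omega s b) >=
  Prob p (fun omega => reach omega s a) * Prob p (fun omega => reach omega s b).
Proof.
exact: reach_correlatedP.
Qed.
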